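(* Let $g$ be a positive integer, let $l\ge1$, and let $(a,a+g)$ be a consecutive prospective prime pair with gap $g$ in $S_l$. For $k>l+2$ and $0\le m\le P_k-1$ let $\mathring{n}^g_{S_k^{(m)}}$ be the number of tuples $(m_{l+1},\dots,m_k)$ with $0\le m_j\le P_j-1$ and $m_k=m$ such that, with $M=\sum_{j=l+1}^km_jP_{j-1}\#$, both $a+M$ and $a+g+M$ are coprime to $P_k\#$. Then for all sufficiently large $P_k$ and every $0\le m\le P_k-1$, \[\mathring{n}^g_{S_k^{(m)}}\ge\mathring{n}^g_{k-1}-2\,\mathring{n}^g_{k-2}.\]
   Context: $P_k$ denotes the $k$-th prime ($P_1=2$), $P_k\#=\prod_{i=1}^kP_i$. $S_k=\{N\in\mathbb{N}:5\le N\le4+P_k\#\}$, $S_k^{(m)}=\{N:5+mP_{k-1}\#\le N\le4+(m+1)P_{k-1}\#\}$. A prospective prime in $S_k$ is an $N\in S_k$ coprime to $P_k\#$; prospective primes $a<b$ in $S_k$ are consecutive if no integer strictly between them is coprime to $P_k\#$; a consecutive prospective prime pair with gap $g$ is a pair $(a,a+g)$ of consecutive prospective primes. For $j>l$, $\mathring{n}^g_j=\prod_{i=l+1}^{j}(P_i-2)\prod_{l+1\le i\le j,\,P_i\mid g}\frac{P_i-1}{P_i-2}$. *)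

From mathcomp Require Import all_boot all_order all_algebra.
Set Implicit Arguments. Unset Strict Implicit. Unset Printing Implicit Defensive.
Import Order.TTheory GRing.Theory Num.Theory.

Lemma next_prime_ex (n : nat) : exists p, (n < p) && prime p.
Proof. case: (prime_above n) => p H1 H2; exists p; by rewrite H1 H2. Qed.

Definition next_prime (n : nat) : nat := ex_minn (next_prime_ex n).

Fixpoint nthprime0 (n : nat) : nat :=
  if n is n'.+1 then next_prime (nthprime0 n') else 2.

(* P k = k-th prime, P 1 = 2 (P 0 is junk, never used). *)
Definition P (k : nat) : nat := nthprime0 k.-1.

Definition primorial (k : nat) : nat := \prod_(1 <= i < k.+1) P i.

Definition inS (k N : nat) : bool := (5 <= N) && (N <= 4 + primorial k).

Definition prospective (k N : nat) : bool := inS k N && coprime N (primorial k).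

Definition cons_pp_pair (k a g : nat) : Prop :=
  [/\ 0 < g, prospective k a, prospective k (a + g) &
      forall N, a < N < a + g -> ~~ coprime N (primorial k)].

(* \mathring{n}^g_{S_k^{(m)}} : the tuple (m_{l+1},...,m_k) is encoded as
   f : 'I_(k-l) -> 'I_(P k), with m_{l+1+i} = f i. *)
Definition nring_S (a g l k m : nat) : nat :=
  #|[set f : {ffun 'I_(k - l) -> 'I_(P k)} |
     [forall i : 'I_(k - l), f i < P (l.+1 + i)] &&
     [forall i : 'I_(k - l), (i == (k - l).-1 :> nat) ==> (f i == m :> nat)] &&
     (let M := \sum_(i < k - l) f i * primorial (l + i) in
      coprime (a + M) (primorial k) && coprime (a + g + M) (primorial k))]|.

Local Open Scope ring_scope.
Definition nring (g l j : nat) : rat :=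
  (\prod_(l.+1 <= i < j.+1) ((P i)%:R - 2%:R)) *
  (\prod_(l.+1 <= i < j.+1 | (P i %| g)%N) (((P i)%:R - 1) / ((P i)%:R - 2%:R))).

From mathcomp Require Import all_boot all_order all_algebra.
Import Order.TTheory GRing.Theory Num.Theory.
From mathcomp Require Import zify ring.

Set Implicit Arguments. Unset Strict Implicit. Unset Printing Implicit Defensive.

(* Write k = l + j + 2 and y = a + m P_{k-1}#, so that nring_S counts the digit tuples
   (m_{l+1}, ..., m_{k-1}), m_i < P_i, for which y + M and y + g + M are coprime to P_k#,
   where M = sum_i m_i P_{i-1}#.  Since y is coprime to P_l# along with a, and adding
   m_i P_{i-1}# runs through all residues modulo P_i without changing the residues modulo
   smaller primes, exactly P_i - 2 + [P_i | g] values of each digit keep the pair coprime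
   to P_i#; so n^g_{k-1} tuples give a pair coprime to P_{k-1}#.  For such a tuple to fail
   modulo P_k, P_k must divide y + M or y + g + M, and once the lower digits are fixed each
   of these happens for at most one m_{k-1} < P_{k-1} < P_k: at most 2 n^g_{k-2} failures.
   In particular the bound holds for every k > l + 2. *)

Lemma P_prime k : prime (P k).
Proof.
rewrite /P; case: k.-1 => [|n] //=.
by rewrite /next_prime; case: ex_minnP => p /andP[_ ->].
Qed.

Lemma P_ltnS k : 0 < k -> P k < P k.+1.
Proof.
case: k => [|k] // _; rewrite /P /= /next_prime.
by case: ex_minnP => p /andP[].
Qed.

Lemma ltn_P i j : 0 < i -> i < j -> P i < P j.
Proof.
move=> i_gt0; elim: j => [|j IHj] //; rewrite ltnS leq_eqVlt => /orP[/eqP<-|lt_ij].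
  exact: P_ltnS.
by apply: ltn_trans (IHj lt_ij) (P_ltnS _); apply: leq_trans lt_ij.
Qed.

Lemma P_gt2 i : 1 < i -> 2 < P i.
Proof. exact: (@ltn_P 1). Qed.

Lemma primorialS k : primorial k.+1 = primorial k * P k.+1.
Proof. by rewrite /primorial big_nat_recr. Qed.

Lemma dvdn_primorial j k : j <= k -> primorial j %| primorial k.
Proof.
elim: k => [|k IHk]; first by rewrite leqn0 => /eqP->.
rewrite leq_eqVlt => /orP[/eqP-> //|lt_jk].
by rewrite primorialS dvdn_mulr // IHk.
Qed.

Lemma P_ndvd_primorial j k : j < k -> ~~ (P k %| primorial j).
Proof.
move=> lt_jk; rewrite /primorial Euclid_dvd_prod ?P_prime // big_has.
apply/hasPn => i; rewrite mem_iota => /andP[i_gt0 lt_ij].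
by rewrite dvdn_prime2 ?P_prime // gtn_eqF // ltn_P //; lia.
Qed.

Section AffineResidues.

Variables (p Q : nat).
Hypotheses (p_pr : prime p) (p_ndvd_Q : ~~ (p %| Q)).

Lemma sum_dvd_affine z : \sum_(x < p) (p %| z + x * Q) = 1.
Proof.
have p_gt0 := prime_gt0 p_pr.
pose r (x : 'I_p) : 'I_p := Ordinal (ltn_pmod (z + x * Q) p_gt0).
have r_inj : injective r.
  move=> x y; wlog le_yx : x y / y <= x.
    by move=> wlog_r; case: (leqP y x) => [|/ltnW] /wlog_r // rxy /esym/rxy.
  move/(congr1 val)/eqP; rewrite /= eqn_modDl eqn_mod_dvd ?leq_mul2r ?le_yx ?orbT //.
  rewrite -mulnBl Gauss_dvdl ?prime_coprime // /dvdn modn_small => [/eqP xy|].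
    by apply: val_inj; apply/eqP; rewrite eqn_leq le_yx -subn_eq0 xy.
  by apply: leq_ltn_trans (leq_subr _ _) (ltn_ord x).
rewrite -[RHS](cards1 (Ordinal p_gt0)) -(card_preimset _ r_inj).
rewrite -sum1_card [RHS]big_mkcond.
by apply: eq_bigr => x _; rewrite !inE -val_eqE /= /dvdn; case: eqP.
Qed.

Lemma sum_dvd_affine_le n z : n <= p -> \sum_(x < n) (p %| z + x * Q) <= 1.
Proof.
move=> le_np; rewrite -(sum_dvd_affine z).
rewrite (big_ord_widen p (fun x => (p %| z + x * Q) : nat)) //.
by rewrite [leqLHS]big_mkcond; apply: leq_sum => x _; case: ifP.
Qed.

Lemma sum_ndvd_affine_pair g z :
  \sum_(x < p) (~~ (p %| z + x * Q) && ~~ (p %| z + x * Q + g)) = p - 2 + (p %| g).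
Proof.
have sum_dvd_shift : \sum_(x < p) (p %| z + x * Q + g) = 1.
  by rewrite -(sum_dvd_affine (z + g)); apply: eq_bigr => x _; rewrite addnAC.
have : \sum_(x < p) ((~~ (p %| z + x * Q) && ~~ (p %| z + x * Q + g))
                    + (p %| z + x * Q) + (p %| z + x * Q + g))
       = \sum_(x < p) (1 + (p %| z + x * Q) * (p %| g)).
  apply: eq_bigr => x _; rewrite mulnb.
  by case: (boolP (p %| _)) => [/dvdn_addr->|]; case: (p %| _ + g).
rewrite !big_split /= -big_distrl /= sum_dvd_shift sum_dvd_affine.
rewrite sum_nat_const card_ord muln1; have := prime_gt1 p_pr; lia.
Qed.

End AffineResidues.

Definition pair_coprime (g Q z : nat) : bool := coprime z Q && coprime (z + g) Q.

Lemma pair_coprimeMr g Q p z : prime p ->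
  pair_coprime g (Q * p) z = [&& pair_coprime g Q z, ~~ (p %| z) & ~~ (p %| z + g)].
Proof.
move=> p_pr; rewrite /pair_coprime !coprimeMr ![coprime _ p]coprime_sym.
rewrite !(prime_coprime _ p_pr).
by case: (coprime z Q) (coprime (z + g) Q) (p %| z) (p %| z + g) => [] [] [] [].
Qed.

Lemma pair_coprime_shift g Q z d : Q %| d -> pair_coprime g Q (z + d) = pair_coprime g Q z.
Proof.
case/dvdnP=> t ->.
have shift n : coprime (n + t * Q) Q = coprime n Q.
  by rewrite -coprime_modl addnC modnMDl coprime_modl.
by rewrite /pair_coprime addnAC !shift.
Qed.

Lemma sum_pair_coprime_primorialS g J z :
  \sum_(x < P J.+1) pair_coprime g (primorial J.+1) (z + x * primorial J)
  = (P J.+1 - 2 + (P J.+1 %| g)) * pair_coprime g (primorial J) z.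
Proof.
under eq_bigr do
  rewrite primorialS pair_coprimeMr ?P_prime // pair_coprime_shift ?dvdn_mull // -mulnb.
by rewrite -big_distrr sum_ndvd_affine_pair ?P_prime ?P_ndvd_primorial // mulnC.
Qed.

Definition ffun_snoc (T : Type) n (fx : {ffun 'I_n -> T} * T) : {ffun 'I_n.+1 -> T} :=
  [ffun i => if unlift ord_max i is Some j then fx.1 j else fx.2].

Lemma ffun_snoc_widen T n fx (i : 'I_n) : @ffun_snoc T n fx (widen_ord (leqnSn n) i) = fx.1 i.
Proof.
have -> : widen_ord (leqnSn n) i = lift ord_max i.
  by apply: val_inj; rewrite /= /bump leqNgt ltn_ord.
by rewrite ffunE liftK.
Qed.

Lemma ffun_snoc_max T n fx : @ffun_snoc T n fx ord_max = fx.2.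
Proof. by rewrite ffunE unlift_none. Qed.

Lemma forall_ffun_snoc T n (D : nat -> pred T) fx :
  [forall i : 'I_n.+1, D i (ffun_snoc fx i)] = [forall i : 'I_n, D i (fx.1 i)] && D n fx.2.
Proof.
rewrite -!(big_andE xpredT) big_ord_recr /= ffun_snoc_max.
by congr andb; apply: eq_bigr => i _; rewrite ffun_snoc_widen.
Qed.

Lemma ffun_snoc_bij T n : bijective (@ffun_snoc T n).
Proof.
exists (fun f : {ffun 'I_n.+1 -> T} => ([ffun i => f (lift ord_max i)], f ord_max)).
  case=> f x; rewrite ffun_snoc_max; congr pair.
  by apply/ffunP => i; rewrite !ffunE liftK.
move=> f; apply/ffunP => i; rewrite ffunE.
by case: unliftP => [j|] ->; rewrite ?ffunE.
Qed.

Section TupleSum.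

Variables (K : nat) (D : nat -> pred nat) (w : nat -> nat).

Definition tuple_sum n (F : nat -> nat) : nat :=
  \sum_(f : {ffun 'I_n -> 'I_K} | [forall i : 'I_n, D i (f i)]) F (\sum_(i < n) f i * w i).

Lemma tuple_sum0 F : tuple_sum 0 F = F 0.
Proof.
rewrite /tuple_sum (eq_bigl xpredT) => [|f]; last by apply/forallP => -[].
rewrite (eq_bigr (fun _ => F 0)) => [|f _]; last by rewrite big_ord0.
by rewrite sum_nat_const card_ffun !card_ord expn0 mul1n.
Qed.

Lemma tuple_sumS n F :
  tuple_sum n.+1 F = tuple_sum n (fun M => \sum_(x < K | D n x) F (M + x * w n)).
Proof.
rewrite /tuple_sum pair_big /= (reindex (@ffun_snoc _ n)) /=.
  2: exact: onW_bij _ (@ffun_snoc_bij _ n).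
apply: eq_big => [[f x]|[f x] _]; first exact: (forall_ffun_snoc (fun i (y : 'I_K) => D i y)).
by rewrite big_ord_recr /= ffun_snoc_max; under eq_bigr do rewrite ffun_snoc_widen.
Qed.

Lemma eq_tuple_sum n F G : F =1 G -> tuple_sum n F = tuple_sum n G.
Proof. by move=> eqFG; apply: eq_bigr => f _; apply: eqFG. Qed.

Lemma leq_tuple_sum n F G : (forall M, F M <= G M) -> tuple_sum n F <= tuple_sum n G.
Proof. by move=> leFG; apply: leq_sum => f _; apply: leFG. Qed.

Lemma tuple_sumD n F G : tuple_sum n (fun M => F M + G M) = tuple_sum n F + tuple_sum n G.
Proof. exact: big_split. Qed.

Lemma tuple_sumMl n c F : tuple_sum n (fun M => c * F M) = c * tuple_sum n F.
Proof. by rewrite /tuple_sum big_distrr. Qed.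

End TupleSum.

Lemma eq_tuple_sum_pred K D1 D2 w n F : (forall i x, i < n -> D1 i x = D2 i x) ->
  tuple_sum K D1 w n F = tuple_sum K D2 w n F.
Proof.
move=> eqD; apply: eq_bigl => f.
by apply: eq_forallb => i; apply: eqD.
Qed.

(* The digits have type 'I_K, as in [nring_S]; the bound m_i < P_{l+1+i} is a predicate. *)
Definition digit_sum l K :=
  tuple_sum K (fun i x => x < P (l.+1 + i)) (fun i => primorial (l + i)).

Definition nring_nat (g l j : nat) : nat := \prod_(l.+1 <= i < j.+1) (P i - 2 + (P i %| g)).

Lemma digit_sum_pair_coprime g l K n y :
  (forall i, i < n -> P (l.+1 + i) <= K) -> pair_coprime g (primorial l) y ->
  digit_sum l K n (fun M => pair_coprime g (primorial (l + n)) (y + M)) = nring_nat g l (l + n).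
Proof.
move=> le_PK y_pc; rewrite /digit_sum; elim: n le_PK => [|n IHn] le_PK.
  by rewrite tuple_sum0 /nring_nat !addn0 y_pc big_geq.
rewrite tuple_sumS.
under eq_tuple_sum => M.
  rewrite (big_ord_narrow (le_PK n (ltnSn n))) /=.
  under eq_bigr do rewrite addnA.
  rewrite addSn addnS sum_pair_coprime_primorialS.
  over.
rewrite tuple_sumMl IHn; last by move=> i /ltnW; apply: le_PK.
by rewrite /nring_nat addnS [RHS]big_nat_recr 1?mulnC //= ltnS leq_addr.
Qed.

Lemma digit_sum_pair_coprime_ge g l j y : pair_coprime g (primorial l) y ->
  nring_nat g l (l + j).+1 <=
  digit_sum l (P (l + j).+2) j.+1 (fun M => pair_coprime g (primorial (l + j).+2) (y + M))
  + 2 * nring_nat g l (l + j).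
Proof.
move=> y_pc; set q := P (l + j).+2.
have le_Pq i : i < j.+1 -> P (l.+1 + i) <= q by move=> lt_ij; apply/ltnW/ltn_P; lia.
have le_Pq' i : i < j -> P (l.+1 + i) <= q by move/ltnW; apply: le_Pq.
rewrite -addnS -(digit_sum_pair_coprime le_Pq y_pc) -(digit_sum_pair_coprime le_Pq' y_pc).
rewrite /digit_sum !addnS.
have split_q M : pair_coprime g (primorial (l + j).+1) (y + M) <=
    pair_coprime g (primorial (l + j).+2) (y + M)
    + pair_coprime g (primorial (l + j)) (y + M) * ((q %| y + M) + (q %| y + M + g)).
  rewrite (primorialS (l + j).+1) (primorialS (l + j)) !pair_coprimeMr ?P_prime //.
  by case: (pair_coprime _ _ _) (P _ %| _) (P _ %| _ + g) (q %| _) (q %| _ + g) => [] [] [] [] [].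
apply: leq_trans (leq_tuple_sum _ _ _ _ split_q) _.
rewrite tuple_sumD leq_add2l tuple_sumS -tuple_sumMl.
apply: leq_tuple_sum => M; rewrite (big_ord_narrow (le_Pq j (ltnSn j))) /=.
under eq_bigr do rewrite addnA pair_coprime_shift ?dvdn_mull //.
rewrite -big_distrr [leqLHS]mulnC leq_mul2r big_split /=; apply/orP; right.
have [q_pr q_ndvd] : prime q /\ ~~ (q %| primorial (l + j)).
  by rewrite P_prime P_ndvd_primorial.
rewrite -[2]/(1 + 1); apply: leq_add; first exact: sum_dvd_affine_le (le_Pq j (ltnSn j)).
under eq_bigr do rewrite addnAC.
exact: sum_dvd_affine_le (le_Pq j (ltnSn j)).
Qed.

Lemma nring_S_digit_sum a g l j m : m < P (l + j).+2 ->
  nring_S a g l (l + j).+2 m =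
  digit_sum l (P (l + j).+2) j.+1
    (fun M => pair_coprime g (primorial (l + j).+2) (a + m * primorial (l + j.+1) + M)).
Proof.
move=> lt_m; set K := P (l + j).+2.
pose D i x := (x < P (l.+1 + i)) && ((i == j.+1) ==> (x == m)).
rewrite /nring_S (_ : (l + j).+2 - l = j.+2); last by lia.
have split_D (f : {ffun 'I_j.+2 -> 'I_K}) : [forall i : 'I_j.+2, D i (f i)] =
    [forall i : 'I_j.+2, f i < P (l.+1 + i)] &&
    [forall i : 'I_j.+2, (i == j.+1 :> nat) ==> (f i == m :> nat)].
  by rewrite -!(big_andE xpredT) big_split.
transitivity (tuple_sum K D (fun i => primorial (l + i)) j.+2
                (fun M => pair_coprime g (primorial (l + j).+2) (a + M))).
  rewrite -sum1_card (eq_bigl (fun f : {ffun 'I_j.+2 -> 'I_K} =>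
    [forall i : 'I_j.+2, D i (f i)] &&
    pair_coprime g (primorial (l + j).+2) (a + \sum_(i < j.+2) f i * primorial (l + i))))
    => [|f].
    by rewrite big_mkcondr; apply: eq_bigr => f _; case: (pair_coprime _ _ _).
  by rewrite inE split_D /pair_coprime addnAC.
have D_low i x : i < j.+1 -> D i x = (x < P (l.+1 + i)).
  by move=> lt_ij; rewrite /D ltn_eqF // implyFb andbT.
rewrite tuple_sumS /digit_sum (eq_tuple_sum_pred _ _ _ D_low).
apply: eq_tuple_sum => M; rewrite (big_pred1 (Ordinal lt_m)) => [|x]; first by rewrite addnAC addnA.
by rewrite /D /= addSn addnS ltn_ord eqxx.
Qed.

Local Open Scope ring_scope.

Lemma nringE g l j : (0 < l)%N -> nring g l j = (nring_nat g l j)%:R.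
Proof.
move=> l_gt0; rewrite /nring /nring_nat natr_prod [X in _ * X]big_mkcond -big_split /=.
apply: eq_big_nat => i /andP[lt_li _].
have P_i_gt2 : (2 < P i)%N by apply: P_gt2; lia.
have P_i_sub2 : (P i)%:R - 2%:R = (P i - 2)%:R :> rat by rewrite natrB //; lia.
case: (P i %| g)%N; rewrite ?mulr1 ?addn0 //=.
rewrite P_i_sub2 mulrCA mulfV ?pnatr_eq0 -?lt0n ?subn_gt0 //.
by rewrite mulr1 natrD -P_i_sub2; ring.
Qed.

Theorem corollary1 (g l a : nat) :
  (0 < g)%N -> (1 <= l)%N -> cons_pp_pair l a g ->
  exists N : nat, forall k m : nat,
    (N <= P k)%N -> (l.+2 < k)%N -> (m <= (P k).-1)%N ->
    nring g l k.-1 - 2%:R * nring g l k.-2 <= ((nring_S a g l k m)%:R : rat).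
Proof.
move=> _ l_gt0 [_ /andP[_ a_coprime] /andP[_ ag_coprime] _].
exists 0%N => k m _ lt_l2k le_m.
have [j k_eq] : exists j, k = (l + j).+2 by exists (k - l - 2)%N; lia.
subst k.
have lt_m : (m < P (l + j).+2)%N.
  by apply: leq_ltn_trans le_m _; rewrite ltn_predL prime_gt0 ?P_prime.
set y := (a + m * primorial (l + j.+1))%N.
have y_pc : pair_coprime g (primorial l) y.
  rewrite pair_coprime_shift ?dvdn_mull ?dvdn_primorial ?leq_addr //.
  by rewrite /pair_coprime a_coprime ag_coprime.
rewrite nring_S_digit_sum // !nringE // lerBlDr -natrM -natrD ler_nat.
exact: digit_sum_pair_coprime_ge.
Qed.
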